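(* Let $A_1,A_2,A_3,A_4$ be four points in $\mathbb{R}^3$, and write $d_{ij}=|A_iA_j|$ and $\overrightarrow{d}_{ij}=\overrightarrow{A_iA_j}$. Consider the Cayley–Menger determinant $$D=\begin{vmatrix} 0&1&1&1&1\\ 1&0&d_{12}^2&d_{13}^2&d_{14}^2\\ 1&d_{12}^2&0&d_{23}^2&d_{24}^2\\ 1&d_{13}^2&d_{23}^2&0&d_{34}^2\\ 1&d_{14}^2&d_{24}^2&d_{34}^2&0\end{vmatrix}$$ as a polynomial in the six independent variables $d_{12}^2,d_{13}^2,d_{14}^2,d_{23}^2,d_{24}^2,d_{34}^2$. Then: (1) $\displaystyle \frac12\frac{\partial D}{\partial d_{13}^2}=-16\,\langle \overrightarrow{S}_{124},\overrightarrow{S}_{234}\rangle$, where $\overrightarrow{S}_{ijk}=\frac12\,\overrightarrow{d}_{ij}\times\overrightarrow{d}_{jk}$ and $\langle\cdot,\cdot\rangle$ is the standard scalar product of $\mathbb{R}^3$ (the partial derivative being evaluated at the actual squared distances of the four points). (2) If the four points are coplanar, then $\displaystyle \frac12\frac{\partial D}{\partial d_{13}^2}=-16\,S_{124}\,S_{234}$, where $S_{ijk}$ denotes the oriented area of the triangle $A_iA_jA_k$ in that plane (with respect to a fixed orientation of the plane).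
   Context: $\times$ is the cross product in $\mathbb{R}^3$. Oriented area: $S_{ijk}$ is the signed area of triangle $A_iA_jA_k$, so that e.g. $S_{ijk}=-S_{ikj}$ and $|S_{ijk}|=|\overrightarrow{S}_{ijk}|$. *)

From HB Require Import structures.
From mathcomp Require Import all_boot all_order all_algebra.
Set Implicit Arguments. Unset Strict Implicit. Unset Printing Implicit Defensive.
Import Order.TTheory GRing.Theory Num.Theory.
Local Open Scope ring_scope.

Definition dotp (R : ringType) (u v : 'rV[R]_3) : R := \sum_(k < 3) u 0 k * v 0 k.

(* cross product: (u x v)_k = u_{k+1} v_{k+2} - u_{k+2} v_{k+1} (indices mod 3) *)
Definition crossp (R : ringType) (u v : 'rV[R]_3) : 'rV[R]_3 :=
  \row_(k < 3) (u 0 (inord ((k + 1) %% 3)) * v 0 (inord ((k + 2) %% 3))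
              - u 0 (inord ((k + 2) %% 3)) * v 0 (inord ((k + 1) %% 3))).

Definition sqdist (R : ringType) (P Q : 'rV[R]_3) : R := dotp (Q - P) (Q - P).

Definition Svec (R : fieldType) (Ai Aj Ak : 'rV[R]_3) : 'rV[R]_3 :=
  2^-1 *: crossp (Aj - Ai) (Ak - Aj).

Definition cm_entry (R : ringType) (x12 x13 x14 x23 x24 x34 : R) (i j : nat) : R :=
  if i == j then 0 else
  match minn i j, maxn i j with
  | 0%N, _ => 1
  | 1%N, 2%N => x12
  | 1%N, 3%N => x13
  | 1%N, 4%N => x14
  | 2%N, 3%N => x23
  | 2%N, 4%N => x24
  | 3%N, 4%N => x34
  | _, _ => 0
  end.

Definition CM (R : ringType) (x12 x13 x14 x23 x24 x34 : R) : 'M[R]_5 :=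
  \matrix_(i < 5, j < 5) cm_entry x12 x13 x14 x23 x24 x34 i j.

Definition CMdet (R : comRingType) (x12 x13 x14 x23 x24 x34 : R) : R :=
  \det (CM x12 x13 x14 x23 x24 x34).

(* partial derivative of the polynomial D w.r.t. the variable d13^2,
   evaluated at (x12,...,x34): formal derivative of the univariate
   polynomial obtained by freezing the other five variables. *)
Definition dCM_d13 (R : comRingType) (x12 x13 x14 x23 x24 x34 : R) : R :=
  (CMdet x12%:P 'X x14%:P x23%:P x24%:P x34%:P)^`().[x13].

Definition plane_pt (R : ringType) (P u v : 'rV[R]_3) (p : R * R) : 'rV[R]_3 :=
  P + p.1 *: u + p.2 *: v.

Definition oriented_area (R : fieldType) (p q r : R * R) : R :=
  2^-1 * ((q.1 - p.1) * (r.2 - q.2) - (q.2 - p.2) * (r.1 - q.1)).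

From HB Require Import structures.
From mathcomp Require Import all_boot all_order all_algebra ring.
Set Implicit Arguments. Unset Strict Implicit. Unset Printing Implicit Defensive.
Import Order.TTheory GRing.Theory Num.Theory.
Local Open Scope ring_scope.

(* Expanding the Cayley-Menger determinant shows it is quadratic in x13 with
   leading coefficient -2 x24, so its x13-derivative is an explicit polynomial
   in the other squared distances.  Writing all squared distances through the
   Gram matrix of a = A1 - A2, b = A3 - A2, c = A4 - A2, half of that
   derivative becomes 4 ((a.b)|c|^2 - (a.c)(b.c)), which by Lagrange's
   identity is -16 times (c x a / 2).(b x c / 2) = S124.S234.  For coplanar
   points written in an orthonormal frame (u, v), the cross product of two
   edge vectors is their 2x2 determinant times u x v, whence the oriented
   areas. *)

Section LaplaceExpansion.
Variable R : comNzRingType.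

Definition det_fun n (f : nat -> nat -> R) : R :=
  \det (\matrix_(i < n, j < n) f i j).

(* A [foldr] over [iota] rather than a [\sum], so that [simpl] fully expands
   the determinant of a concrete matrix. *)
Fixpoint laplace_det n (f : nat -> nat -> R) : R :=
  if n is m.+1 then
    foldr (fun j acc =>
             f 0%N j * ((-1) ^+ j * laplace_det m (fun i k => f i.+1 (bump j k))) + acc)
          0 (iota 0 n)
  else 1.

Lemma foldr_iota_sum (F : nat -> R) m n :
  foldr (fun j acc => F j + acc) 0 (iota m n) = \sum_(j < n) F (m + j)%N.
Proof.
elim: n m => [|n IHn] m; first by rewrite big_ord0.
rewrite big_ord_recl /= IHn addn0; congr (_ + _).
by apply: eq_bigr => i _; rewrite addSnnS.
Qed.

Lemma det_fun_laplace n f : det_fun n f = laplace_det n f.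
Proof.
elim: n f => [|n IHn] f; first exact: det_mx00.
rewrite /det_fun (expand_det_row _ ord0); symmetry; apply: (etrans (foldr_iota_sum _ 0 _)).
apply: eq_bigr => j _; rewrite -/laplace_det -IHn add0n /cofactor add0n mxE.
by congr (_ * (_ * \det _)); apply/matrixP => i k; rewrite !mxE.
Qed.
End LaplaceExpansion.

Definition cm_coef1 (R : comNzRingType) (x12 x14 x23 x24 x34 : R) : R :=
  2 * x24 * x34 - 2 * x24 * x24 + 2 * x23 * x24 - 2 * x14 * x34 + 2 * x12 * x34
  + 2 * x14 * x24 + 2 * x14 * x23 + 2 * x12 * x24 - 2 * x12 * x23.

Definition cm_coef0 (R : comNzRingType) (x12 x14 x23 x24 x34 : R) : R :=
  - 2 * x23 * x24 * x34 - 2 * x12 * x34 * x34 + 2 * x12 * x23 * x34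
  + 2 * x12 * x24 * x34 + 2 * x14 * x23 * x34 + 2 * x14 * x23 * x24
  - 2 * x14 * x23 * x23 + 2 * x12 * x14 * x34 - 2 * x14 * x14 * x23
  - 2 * x12 * x12 * x34 - 2 * x12 * x14 * x24 + 2 * x12 * x14 * x23.

Lemma CMdet_quadratic (R : comNzRingType) (x12 x13 x14 x23 x24 x34 : R) :
  CMdet x12 x13 x14 x23 x24 x34 =
  - 2 * x24 * x13 ^+ 2 + cm_coef1 x12 x14 x23 x24 x34 * x13 + cm_coef0 x12 x14 x23 x24 x34.
Proof.
rewrite [LHS](det_fun_laplace 5 (cm_entry x12 x13 x14 x23 x24 x34)) /= /cm_entry /=.
rewrite /cm_coef1 /cm_coef0; ring.
Qed.

Lemma rmorph_cm_coef1 (R S : comNzRingType) (f : {rmorphism R -> S}) x12 x14 x23 x24 x34 :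
  f (cm_coef1 x12 x14 x23 x24 x34) = cm_coef1 (f x12) (f x14) (f x23) (f x24) (f x34).
Proof. by rewrite /cm_coef1 !(rmorph_nat, rmorphM, rmorphD, rmorphN). Qed.

Lemma rmorph_cm_coef0 (R S : comNzRingType) (f : {rmorphism R -> S}) x12 x14 x23 x24 x34 :
  f (cm_coef0 x12 x14 x23 x24 x34) = cm_coef0 (f x12) (f x14) (f x23) (f x24) (f x34).
Proof. by rewrite /cm_coef0 !(rmorph_nat, rmorphM, rmorphD, rmorphN). Qed.

Lemma dCM_d13E (R : comNzRingType) (x12 x13 x14 x23 x24 x34 : R) :
  dCM_d13 x12 x13 x14 x23 x24 x34 = - 4 * x24 * x13 + cm_coef1 x12 x14 x23 x24 x34.
Proof.
rewrite /dCM_d13 CMdet_quadratic -!rmorph_cm_coef1 -!rmorph_cm_coef0.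
rewrite !derivE !hornerE /=; ring.
Qed.

Lemma dCM_d13_gram (R : comNzRingType) (aa bb cc ab ac bc : R) :
  dCM_d13 aa (aa + bb - 2 * ab) (aa + cc - 2 * ac) bb cc (bb + cc - 2 * bc) =
  8 * (ab * cc - ac * bc).
Proof. rewrite dCM_d13E /cm_coef1; ring. Qed.

Section VectorAlgebra.
Variable R : comNzRingType.
Implicit Types (a b c d : R) (u v w z O P Q T : 'rV[R]_3).

Lemma dotpE u v :
  dotp u v = u 0 (inord 0) * v 0 (inord 0) + u 0 (inord 1) * v 0 (inord 1)
             + u 0 (inord 2) * v 0 (inord 2).
Proof.
rewrite /dotp !big_ord_recr big_ord0 /= add0r.
by congr (_ * _ + _ * _ + _ * _); congr (_ 0 _); apply: val_inj; rewrite /= inordK.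
Qed.

Lemma crossp_entry0 u v :
  crossp u v 0 (inord 0) = u 0 (inord 1) * v 0 (inord 2) - u 0 (inord 2) * v 0 (inord 1).
Proof. by rewrite mxE inordK. Qed.

Lemma crossp_entry1 u v :
  crossp u v 0 (inord 1) = u 0 (inord 2) * v 0 (inord 0) - u 0 (inord 0) * v 0 (inord 2).
Proof. by rewrite mxE inordK. Qed.

Lemma crossp_entry2 u v :
  crossp u v 0 (inord 2) = u 0 (inord 0) * v 0 (inord 1) - u 0 (inord 1) * v 0 (inord 0).
Proof. by rewrite mxE inordK. Qed.

Lemma dotpC u v : dotp u v = dotp v u.
Proof. by rewrite !dotpE; ring. Qed.

Lemma dotpZ a b u v : dotp (a *: u) (b *: v) = a * b * dotp u v.
Proof. by rewrite !dotpE !mxE; ring. Qed.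

Lemma dotp0l v : dotp 0 v = 0.
Proof. by rewrite dotpE !mxE; ring. Qed.

Lemma dotp0r u : dotp u 0 = 0.
Proof. by rewrite dotpC dotp0l. Qed.

Lemma crossp0l v : crossp 0 v = 0.
Proof. by apply/rowP => k; rewrite !mxE !mul0r subrr. Qed.

Lemma crossp0r u : crossp u 0 = 0.
Proof. by apply/rowP => k; rewrite !mxE !mulr0 subrr. Qed.

Lemma dotp_crossp u v w z :
  dotp (crossp u v) (crossp w z) = dotp u w * dotp v z - dotp u z * dotp v w.
Proof. by rewrite !dotpE !crossp_entry0 !crossp_entry1 !crossp_entry2; ring. Qed.

Lemma sqdist_gram O P Q :
  sqdist P Q = dotp (P - O) (P - O) + dotp (Q - O) (Q - O) - 2 * dotp (P - O) (Q - O).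
Proof. by rewrite /sqdist !dotpE !mxE; ring. Qed.

Lemma crossp_edges O P Q T :
  crossp (Q - P) (T - Q) =
  crossp (P - O) (Q - O) + crossp (Q - O) (T - O) + crossp (T - O) (P - O).
Proof. by apply/rowP => k; rewrite !mxE; ring. Qed.

Lemma dotp_comb a b c d u v :
  dotp (a *: u + b *: v) (c *: u + d *: v) =
  a * c * dotp u u + (a * d + b * c) * dotp u v + b * d * dotp v v.
Proof. by rewrite !dotpE !mxE; ring. Qed.

Lemma dotp_crossp_comb a b c d a' b' c' d' u v :
  dotp (crossp (a *: u + b *: v) (c *: u + d *: v))
       (crossp (a' *: u + b' *: v) (c' *: u + d' *: v)) =
  (a * d - b * c) * (a' * d' - b' * c') * (dotp u u * dotp v v - dotp u v ^+ 2).
Proof. by rewrite dotp_crossp !dotp_comb; ring. Qed.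

Lemma plane_ptB P u v p q :
  plane_pt P u v q - plane_pt P u v p = (q.1 - p.1) *: u + (q.2 - p.2) *: v.
Proof. by apply/rowP => k; rewrite !mxE; ring. Qed.
End VectorAlgebra.

Lemma dCM_d13_Svec (R : fieldType) (A1 A2 A3 A4 : 'rV[R]_3) : (2 : R) != 0 ->
  2^-1 * dCM_d13 (sqdist A1 A2) (sqdist A1 A3) (sqdist A1 A4)
                 (sqdist A2 A3) (sqdist A2 A4) (sqdist A3 A4) =
  - 16 * dotp (Svec A1 A2 A4) (Svec A2 A3 A4).
Proof.
move=> two_neq0.
rewrite !(sqdist_gram A2) subrr !(dotp0l, dotp0r) !(mulr0, addr0, subr0, add0r).
rewrite dCM_d13_gram /Svec (crossp_edges A2 A2 A3) (crossp_edges A2 A1 A2) subrr.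
rewrite !(crossp0l, crossp0r) !(add0r, addr0) dotpZ dotp_crossp.
by rewrite (dotpC (A4 - A2) (A3 - A2)); field.
Qed.

Lemma dotp_Svec_plane (R : fieldType) (P u v : 'rV[R]_3) (p q r p' q' r' : R * R) :
  let pt := plane_pt P u v in
  dotp (Svec (pt p) (pt q) (pt r)) (Svec (pt p') (pt q') (pt r')) =
  oriented_area p q r * oriented_area p' q' r' * (dotp u u * dotp v v - dotp u v ^+ 2).
Proof. by rewrite /Svec dotpZ !plane_ptB dotp_crossp_comb /oriented_area; ring. Qed.

Theorem theorem1 (R : realFieldType) (A1 A2 A3 A4 : 'rV[R]_3) :
  let dD := dCM_d13 (sqdist A1 A2) (sqdist A1 A3) (sqdist A1 A4)
                    (sqdist A2 A3) (sqdist A2 A4) (sqdist A3 A4) in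
  (2^-1 * dD = - 16 * dotp (Svec A1 A2 A4) (Svec A2 A3 A4))
  /\
  (forall (P u v : 'rV[R]_3) (p1 p2 p3 p4 : R * R),
      dotp u u = 1 -> dotp v v = 1 -> dotp u v = 0 ->
      A1 = plane_pt P u v p1 -> A2 = plane_pt P u v p2 ->
      A3 = plane_pt P u v p3 -> A4 = plane_pt P u v p4 ->
      2^-1 * dD = - 16 * oriented_area p1 p2 p4 * oriented_area p2 p3 p4).
Proof.
move=> dD.
have half_dD : 2^-1 * dD = - 16 * dotp (Svec A1 A2 A4) (Svec A2 A3 A4).
  by apply: dCM_d13_Svec; rewrite pnatr_eq0.
split=> // P u v p1 p2 p3 p4 uu1 vv1 uv0 E1 E2 E3 E4.
by rewrite half_dD E1 E2 E3 E4 dotp_Svec_plane uu1 vv1 uv0; ring.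
Qed.
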